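(* Let $M$ be a commutative monoid. The free $\mathbb{H}M$-module functor $\mathcal{Z}:\mathbf{Set}\!\downarrow_M\to\mathbb{H}M\text{-}\mathrm{Mod}$ is a symmetric monoidal functor: there are natural and coherent isomorphisms of $\mathbb{H}M$-modules $\mathcal{Z}(S\times T)\cong\mathcal{Z}S\otimes_{\mathbb{H}M}\mathcal{Z}T$ and $\mathcal{Z}\{e\}\cong\mathbb{Z}$, for all sets $S,T$ over $M$.
   Context: Let $M$ be a commutative monoid with identity $e$. $\mathbb{H}M$ has objects the elements of $M$ and morphisms $(x,y):x\to xy$, composition $(xy,z)(x,y)=(x,yz)$; an $\mathbb{H}M$-module $\mathcal{A}$ is a functor $\mathbb{H}M\to\mathbf{Ab}$, i.e. groups $\mathcal{A}(x)$ with $y_*:\mathcal{A}(x)\to\mathcal{A}(xy)$, $y_*z_*=(yz)_*$, $e_*=\mathrm{id}$. The tensor product $(\mathcal{A}\otimes_{\mathbb{H}M}\mathcal{B})(x)$ is the quotient of $\bigoplus_{zt=x}\mathcal{A}(z)\otimes\mathcal{B}(t)$ by the relations $u_*a\otimes b=a\otimes u_*b$ ($a\in\mathcal{A}(v),b\in\mathcal{B}(w),uvw=x$), with $y_*(a\otimes b)=y_*a\otimes b$; this makes $\mathbb{H}M$-modules a symmetric monoidal category with unit $\mathbb{Z}$ ($\mathbb{Z}(x)=\mathbb{Z}$, all $y_*$ the identity). $\mathbf{Set}\!\downarrow_M$ is the category of sets $S$ with a map $\pi:S\to M$, symmetric monoidal with tensor $S\times T$, $\pi(s,t)=\pi(s)\pi(t)$,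 and unit $\{e\}$ with $\pi(e)=e$. For a set $S$ over $M$, $\mathcal{Z}S(x)$ is the free abelian group on pairs $(u,s)\in M\times S$ with $u\,\pi(s)=x$, $y_*(u,s)=(uy,s)$, and $(\mathcal{Z}\varphi)_x(u,s)=(u,\varphi s)$. *)

(* Abelian groups are modelled as setoids (a carrier with a
   congruence); quotients are then given by generated equivalence relations. *)
From Stdlib Require Import ZArith List Permutation.
Import ListNotations.
Set Implicit Arguments.
Unset Strict Implicit.

Record cmonoid := CMonoid {
  mcar :> Type;
  mop : mcar -> mcar -> mcar;
  mone : mcar;
  mopA : forall x y z, mop x (mop y z) = mop (mop x y) z;
  mopC : forall x y, mop x y = mop y x;
  mop1 : forall x, mop x mone = x }.
Arguments mop {c}.
Arguments mone {c}.

Section Proofs.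
Variable M : cmonoid.
Lemma act_proof (u y s x t : M) (h : mop u s = x) (p : mop x y = t) :
  mop (mop u y) s = t.
Proof. subst. rewrite <- mopA, (mopC y s), mopA. reflexivity. Qed.
Lemma assoc_proof (z1 z2 z t x : M) (p' : mop z1 z2 = z) (p : mop z t = x) :
  mop z1 (mop z2 t) = x.
Proof. subst. apply mopA. Qed.
Lemma swap_proof (z t x : M) (p : mop z t = x) : mop t z = x.
Proof. subst. apply mopC. Qed.
Lemma zmap_proof (u s s' x : M) (h : mop u s = x) (e : s' = s) : mop u s' = x.
Proof. subst. reflexivity. Qed.
End Proofs.

(* Free abelian group on X modulo the subgroup generated by relators R:
   formal Z-linear combinations (lists) up to the generated congruence. *)
Section FA.
Variable X : Type.
Variable R : list (Z * X) -> Prop.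
Inductive fa_eqv : list (Z * X) -> list (Z * X) -> Prop :=
| fa_refl l : fa_eqv l l
| fa_sym l l' : fa_eqv l l' -> fa_eqv l' l
| fa_trans l1 l2 l3 : fa_eqv l1 l2 -> fa_eqv l2 l3 -> fa_eqv l1 l3
| fa_app l1 l1' l2 l2' : fa_eqv l1 l1' -> fa_eqv l2 l2' -> fa_eqv (l1 ++ l2) (l1' ++ l2')
| fa_perm l l' : Permutation l l' -> fa_eqv l l'
| fa_merge n m x : fa_eqv [(n, x); (m, x)] [((n + m)%Z, x)]
| fa_zero x : fa_eqv [(0%Z, x)] []
| fa_rel r : R r -> fa_eqv r [].
End FA.

Definition fa_neg X (l : list (Z * X)) : list (Z * X) :=
  map (fun ng => ((- fst ng)%Z, snd ng)) l.

(* HM-modules: functors HM -> Ab, Ab modelled by setoid abelian groups.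
   hact x y t p : A(x) -> A(t) is y_* (with t = x y). *)
Record HMod (M : cmonoid) := {
  hcar : M -> Type;
  heqv : forall x, hcar x -> hcar x -> Prop;
  hzero : forall x, hcar x;
  hadd : forall x, hcar x -> hcar x -> hcar x;
  hopp : forall x, hcar x -> hcar x;
  hact : forall (x y t : M), mop x y = t -> hcar x -> hcar t }.
Arguments hcar {M} h x.
Arguments heqv {M} h {x}.
Arguments hzero {M} h x.
Arguments hadd {M} h {x}.
Arguments hopp {M} h {x}.
Arguments hact {M} h {x y t}.

Section Modules.
Variable M : cmonoid.

Definition zsmul (A : HMod M) x (n : Z) (a : hcar A x) : hcar A x :=
  match n with
  | Z0 => hzero A x
  | Zpos q => Pos.iter (hadd A a) (hzero A x) q
  | Zneg q => hopp A (Pos.iter (hadd A a) (hzero A x) q)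
  end.
Arguments zsmul A {x}.
Definition fa_lift X (A : HMod M) x (f : X -> hcar A x) (l : list (Z * X)) : hcar A x :=
  fold_right (fun ng acc => hadd A (zsmul A (fst ng) (f (snd ng))) acc) (hzero A x) l.

Definition hmap (A B : HMod M) := forall x, hcar A x -> hcar B x.
Definition hid (A : HMod M) : hmap A A := fun x a => a.
Definition hcomp (A B C : HMod M) (g : hmap B C) (f : hmap A B) : hmap A C :=
  fun x a => g x (f x a).
Definition heq_map (A B : HMod M) (f g : hmap A B) : Prop :=
  forall x a, heqv B (f x a) (g x a).
Definition is_hmorph (A B : HMod M) (f : hmap A B) : Prop :=
  (forall x (a a' : hcar A x), heqv A a a' -> heqv B (f x a) (f x a')) /\
  (forall x (a a' : hcar A x), heqv B (f x (hadd A a a')) (hadd B (f x a) (f x a'))) /\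
  (forall x y t (p : mop x y = t) (a : hcar A x),
      heqv B (f t (hact A p a)) (hact B p (f x a))).
Definition hiso (A B : HMod M) (f : hmap A B) : Prop :=
  is_hmorph f /\
  exists g : hmap B A, is_hmorph g /\
    (forall x a, heqv A (g x (f x a)) a) /\ (forall x b, heqv B (f x (g x b)) b).

Definition hZ : HMod M :=
  {| hcar := fun _ => Z; heqv := fun _ => @eq Z; hzero := fun _ => 0%Z;
     hadd := fun _ => Z.add; hopp := fun _ => Z.opp;
     hact := fun x y t _ a => a |}.

Record tgen (A B : HMod M) (x : M) := TG {
  tz : M; tt : M; tp : mop tz tt = x; ta : hcar A tz; tb : hcar B tt }.
Arguments TG {A B x tz tt}.

Inductive trel (A B : HMod M) (x : M) : list (Z * tgen A B x) -> Prop :=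
| trel_addl z t (p : mop z t = x) a a' b :
    trel [(1%Z, TG p (hadd A a a') b); ((-1)%Z, TG p a b); ((-1)%Z, TG p a' b)]
| trel_addr z t (p : mop z t = x) a b b' :
    trel [(1%Z, TG p a (hadd B b b')); ((-1)%Z, TG p a b); ((-1)%Z, TG p a b')]
| trel_eqvl z t (p : mop z t = x) a a' b :
    heqv A a a' -> trel [(1%Z, TG p a b); ((-1)%Z, TG p a' b)]
| trel_eqvr z t (p : mop z t = x) a b b' :
    heqv B b b' -> trel [(1%Z, TG p a b); ((-1)%Z, TG p a b')]
| trel_bal v w u t1 t2 (p1 : mop v u = t1) (p2 : mop w u = t2)
    (q1 : mop t1 w = x) (q2 : mop v t2 = x) (a : hcar A v) (b : hcar B w) :
    (* u_* a (x) b = a (x) u_* b *)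
    trel [(1%Z, TG q1 (hact A p1 a) b); ((-1)%Z, TG q2 a (hact B p2 b))].

Definition tgen_act (A B : HMod M) x y x' (p : mop x y = x') (g : tgen A B x)
  : tgen A B x' :=
  TG (act_proof (tp g) p) (hact A (eq_refl (mop (tz g) y)) (ta g)) (tb g).

Definition htensor (A B : HMod M) : HMod M :=
  {| hcar := fun x => list (Z * tgen A B x);
     heqv := fun x => fa_eqv (@trel A B x);
     hzero := fun _ => [];
     hadd := fun _ l l' => l ++ l';
     hopp := fun _ l => fa_neg l;
     hact := fun x y t p l => map (fun ng => (fst ng, tgen_act p (snd ng))) l |}.

Definition tmap (A A' B B' : HMod M) (f : hmap A A') (g : hmap B B')
  : hmap (htensor A B) (htensor A' B') :=
  fun x l => map (fun ng => (fst ng,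
      TG (tp (snd ng)) (f _ (ta (snd ng))) (g _ (tb (snd ng))))) l.

Definition halpha (A B C : HMod M)
  : hmap (htensor (htensor A B) C) (htensor A (htensor B C)) :=
  fun x l => flat_map (fun ng : Z * tgen (htensor A B) C x =>
     let g := snd ng in
     map (fun mh : Z * tgen A B (tz g) => ((fst ng * fst mh)%Z,
            TG (assoc_proof (tp (snd mh)) (tp g)) (ta (snd mh))
               ([(1%Z, TG (eq_refl (mop (tt (snd mh)) (tt g))) (tb (snd mh)) (tb g))]
                 : hcar (htensor B C) _)))
       (ta g)) l.

Definition hlambda (A : HMod M) : hmap (htensor hZ A) A :=
  fun x l => fa_lift (fun g : tgen hZ A x =>
     zsmul A (ta g) (hact A (swap_proof (tp g)) (tb g))) l.

Definition hrho (A : HMod M) : hmap (htensor A hZ) A :=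
  fun x l => fa_lift (fun g : tgen A hZ x => zsmul A (tb g) (hact A (tp g) (ta g))) l.

Definition hsigma (A B : HMod M) : hmap (htensor A B) (htensor B A) :=
  fun x l => map (fun ng => (fst ng, TG (swap_proof (tp (snd ng))) (tb (snd ng)) (ta (snd ng)))) l.

Record SetOver := SO { so_car :> Type; so_pi : so_car -> M }.
Arguments so_pi : clear implicits.

Definition so_prod (S T : SetOver) : SetOver :=
  @SO (S * T) (fun p : S * T => mop (so_pi S (fst p)) (so_pi T (snd p))).
Definition so_unit : SetOver := @SO unit (fun _ : unit => mone).

Definition zgen (S : SetOver) (x : M) := { p : M * S | mop (fst p) (so_pi S (snd p)) = x }.

Definition zgen_act (S : SetOver) x y t (p : mop x y = t) (g : zgen S x) : zgen S t :=
  let (q, h) := g in exist _ (mop (fst q) y, snd q) (act_proof h p).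

Definition ZF (S : SetOver) : HMod M :=
  {| hcar := fun x => list (Z * zgen S x);
     heqv := fun x => fa_eqv (fun _ : list (Z * zgen S x) => False);
     hzero := fun _ => [];
     hadd := fun _ l l' => l ++ l';
     hopp := fun _ l => fa_neg l;
     hact := fun x y t p l => map (fun ng => (fst ng, zgen_act p (snd ng))) l |}.

Definition zgen_map (S T : SetOver) (f : S -> T)
  (hf : forall s, so_pi T (f s) = so_pi S s) x (g : zgen S x) : zgen T x :=
  let (q, h) := g in exist _ (fst q, f (snd q)) (zmap_proof h (hf (snd q))).

Definition Zmap (S T : SetOver) (f : S -> T)
  (hf : forall s, so_pi T (f s) = so_pi S s) : hmap (ZF S) (ZF T) :=
  fun x l => map (fun ng => (fst ng, zgen_map hf (snd ng))) l.

Definition prod_map (S S' T T' : SetOver) (f : S -> S') (g : T -> T')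
  : so_prod S T -> so_prod S' T' := fun p => (f (fst p), g (snd p)).
Lemma prod_map_pi (S S' T T' : SetOver) (f : S -> S') (g : T -> T')
  (hf : forall s, so_pi S' (f s) = so_pi S s) (hg : forall t, so_pi T' (g t) = so_pi T t) :
  forall p, so_pi (so_prod S' T') (prod_map f g p) = so_pi (so_prod S T) p.
Proof. intros [s t]; simpl; rewrite hf, hg; reflexivity. Qed.

Definition set_assoc (S T U : SetOver)
  : so_prod (so_prod S T) U -> so_prod S (so_prod T U) :=
  fun p => (fst (fst p), (snd (fst p), snd p)).
Lemma set_assoc_pi (S T U : SetOver) :
  forall p, so_pi (so_prod S (so_prod T U)) (set_assoc p) = so_pi (so_prod (so_prod S T) U) p.
Proof. intros [[s t] u]; simpl; apply mopA. Qed.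

Definition set_rho (S : SetOver) : so_prod S so_unit -> S := fun p => fst p.
Lemma set_rho_pi (S : SetOver) : forall p, so_pi S (set_rho p) = so_pi (so_prod S so_unit) p.
Proof. intros [s u]; simpl; rewrite mop1; reflexivity. Qed.

Definition set_lambda (S : SetOver) : so_prod so_unit S -> S := fun p => snd p.
Lemma set_lambda_pi (S : SetOver) : forall p, so_pi S (set_lambda p) = so_pi (so_prod so_unit S) p.
Proof. intros [u s]; simpl; rewrite mopC, mop1; reflexivity. Qed.

Definition set_sigma (S T : SetOver) : so_prod S T -> so_prod T S :=
  fun p => (snd p, fst p).
Lemma set_sigma_pi (S T : SetOver) : forall p, so_pi (so_prod T S) (set_sigma p) = so_pi (so_prod S T) p.
Proof. intros [s t]; simpl; apply mopC. Qed.

End Modules.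
Arguments hZ {M}.
Arguments so_unit {M}.
Arguments so_pi {M} s _.
Arguments hid {M} A x _.
Arguments halpha {M} A B C x _.
Arguments hlambda {M} A x _.
Arguments hrho {M} A x _.
Arguments hsigma {M} A B x _.

From Stdlib Require Import ZArith List Permutation Lia Setoid Morphisms ProofIrrelevance.
Import ListNotations.
Open Scope Z_scope.

(* Every module in sight is a quotient of formal Z-combinations of generators, and
   every map in the statement is the Z-linear extension of a map on generators.
   The comparison mu : ZS (x) ZT -> Z(S x T) sends (u,s) (x) (v,t) to (uv,(s,t));
   it is additive in each variable and kills the balance relation, so it is well
   defined.  Its inverse sends (u,(s,t)) to (u,s) (x) (e,t): since (v,t) = v_*(e,t),
   the balance relation identifies (u,s) (x) (v,t) with (uv,s) (x) (e,t).  The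
   module Z{e}(x) is free on the single generator (x,tt), so n |-> n (x,tt) is an
   isomorphism Z -> Z{e}.  The coherence diagrams then commute already on
   generators, where they reduce to associativity and commutativity in M. *)

Definition scale {X : Type} (n : Z) (l : list (Z * X)) : list (Z * X) :=
  map (fun p => (n * fst p, snd p)) l.
Definition lin {X Y : Type} (F : X -> list (Z * Y)) (l : list (Z * X)) : list (Z * Y) :=
  flat_map (fun p => scale (fst p) (F (snd p))) l.
Definition mapsnd {X Y : Type} (h : X -> Y) (l : list (Z * X)) : list (Z * Y) :=
  map (fun p => (fst p, h (snd p))) l.

#[export] Instance fa_eqv_Equivalence X (R : list (Z * X) -> Prop) : Equivalence (fa_eqv R).
Proof. split; [intro; apply fa_refl | intros ??; apply fa_sym | intros ???; apply fa_trans]. Qed.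
#[export] Instance app_fa_eqv_Proper X (R : list (Z * X) -> Prop) :
  Proper (fa_eqv R ==> fa_eqv R ==> fa_eqv R) (@app _).
Proof. intros ? ? ? ? ? ?; apply fa_app; auto. Qed.

Lemma fa_eqv_of_eq {X : Type} (R : list (Z * X) -> Prop) l l' : l = l' -> fa_eqv R l l'.
Proof. intros ->; reflexivity. Qed.

Section Scale.
Context {X : Type} (R : list (Z * X) -> Prop).

Lemma scale_app n (l l' : list (Z * X)) : scale n (l ++ l') = scale n l ++ scale n l'.
Proof. apply map_app. Qed.
Lemma scale1 (l : list (Z * X)) : scale 1 l = l.
Proof. induction l as [|[c y] l IH]; simpl; auto. rewrite IH. destruct c; reflexivity. Qed.
Lemma scale_scale n m (l : list (Z * X)) : scale n (scale m l) = scale (n * m) l.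
Proof. unfold scale; rewrite map_map; apply map_ext; intros [c y]; simpl; f_equal; lia. Qed.

Lemma scaleD n m l : fa_eqv R (scale n l ++ scale m l) (scale (n + m) l).
Proof.
  induction l as [|[c y] l IH]; simpl; [reflexivity|].
  transitivity ([(n * c, y); (m * c, y)] ++ (scale n l ++ scale m l)).
  - apply fa_perm. simpl. constructor. apply Permutation_sym, Permutation_middle.
  - rewrite IH, fa_merge. simpl. replace ((n + m) * c) with (n * c + m * c) by lia.
    reflexivity.
Qed.
Lemma scale0 l : fa_eqv R (scale 0 l) [].
Proof.
  induction l as [|[c y] l IH]; simpl; [reflexivity|].
  change ((0, y) :: scale 0 l) with ([(0, y)] ++ scale 0 l).
  rewrite IH, fa_zero. reflexivity.
Qed.
Lemma app_scaleN1_nil l : fa_eqv R (l ++ scale (-1) l) [].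
Proof. rewrite <- (scale1 l) at 1. rewrite scaleD. apply scale0. Qed.

Lemma scale_nil l n : fa_eqv R l [] -> fa_eqv R (scale n l) [].
Proof.
  intros H.
  assert (Hnat : forall k : nat, fa_eqv R (scale (Z.of_nat k) l) []).
  { intro k; induction k.
    - apply scale0.
    - rewrite Nat2Z.inj_succ, <- Z.add_1_l, <- scaleD, scale1, IHk, H. reflexivity. }
  destruct (Z_le_gt_dec 0 n).
  - rewrite <- (Z2Nat.id n) by lia. apply Hnat.
  - transitivity (scale n l ++ scale (Z.of_nat (Z.to_nat (- n))) l).
    { rewrite (Hnat (Z.to_nat (- n))), app_nil_r. reflexivity. }
    rewrite scaleD, Z2Nat.id by lia. replace (n + - n) with 0 by lia. apply scale0.
Qed.

Lemma scale_fa_eqv n l l' : fa_eqv R l l' -> fa_eqv R (scale n l) (scale n l').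
Proof.
  induction 1.
  - reflexivity.
  - symmetry; auto.
  - etransitivity; eauto.
  - rewrite !scale_app. apply fa_app; auto.
  - apply fa_perm, Permutation_map; auto.
  - simpl. rewrite fa_merge, Z.mul_add_distr_l. reflexivity.
  - simpl. rewrite Z.mul_0_r. apply fa_zero.
  - apply scale_nil, fa_rel; auto.
Qed.

Lemma eqv_scaleN1_of_app_nil (a b : list (Z * X)) :
  fa_eqv R (a ++ b) [] -> fa_eqv R a (scale (-1) b).
Proof.
  intros H. transitivity (a ++ (b ++ scale (-1) b)).
  - rewrite app_scaleN1_nil, app_nil_r. reflexivity.
  - rewrite app_assoc, H. reflexivity.
Qed.

Lemma single_eqv_of_relator2 (x y : X) :
  fa_eqv R [(1, x); (-1, y)] [] -> fa_eqv R [(1, x)] [(1, y)].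
Proof. intro H. apply (eqv_scaleN1_of_app_nil [(1, x)]) in H. exact H. Qed.
Lemma single_eqv_of_relator3 (x y z : X) :
  fa_eqv R [(1, x); (-1, y); (-1, z)] [] -> fa_eqv R [(1, x)] [(1, y); (1, z)].
Proof. intro H. apply (eqv_scaleN1_of_app_nil [(1, x)]) in H. exact H. Qed.

Lemma nil_of_eqv_app_self (u : list (Z * X)) : fa_eqv R u (u ++ u) -> fa_eqv R u [].
Proof.
  intro H. transitivity (u ++ (u ++ scale (-1) u)).
  - rewrite app_scaleN1_nil, app_nil_r. reflexivity.
  - rewrite app_assoc, <- H. apply app_scaleN1_nil.
Qed.
End Scale.

#[export] Instance scale_fa_eqv_Proper X (R : list (Z * X) -> Prop) n :
  Proper (fa_eqv R ==> fa_eqv R) (scale (X := X) n).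
Proof. intros ? ? H; apply scale_fa_eqv; auto. Qed.

Section LinearMaps.
Context {X Y : Type}.

Lemma lin_app (F : X -> list (Z * Y)) l l' : lin F (l ++ l') = lin F l ++ lin F l'.
Proof. apply flat_map_app. Qed.
Lemma lin_ext (F G : X -> list (Z * Y)) l : (forall x, F x = G x) -> lin F l = lin G l.
Proof. intro H; unfold lin; apply flat_map_ext; intros; rewrite H; auto. Qed.
Lemma lin_single (F : X -> list (Z * Y)) c y : lin F [(c, y)] = scale c (F y).
Proof. unfold lin; simpl; rewrite app_nil_r; reflexivity. Qed.
Lemma lin_single1 (F : X -> list (Z * Y)) y : lin F [(1, y)] = F y.
Proof. rewrite lin_single; apply scale1. Qed.
Lemma lin_scale (F : X -> list (Z * Y)) n l : lin F (scale n l) = scale n (lin F l).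
Proof.
  induction l as [|[c y] l IH]; simpl; auto.
  unfold lin in *; simpl. rewrite IH, scale_app, scale_scale. auto.
Qed.
Lemma lin_scale_fun (F : X -> list (Z * Y)) k l :
  lin (fun x => scale k (F x)) l = scale k (lin F l).
Proof.
  induction l as [|[c y] l IH]; [reflexivity|].
  unfold lin in *; simpl. rewrite IH, scale_app, !scale_scale, Z.mul_comm. reflexivity.
Qed.
End LinearMaps.

Section Linear.
Context {X Y W : Type}.

Lemma lin_lin (F : Y -> list (Z * W)) (G : X -> list (Z * Y)) l :
  lin F (lin G l) = lin (fun x => lin F (G x)) l.
Proof.
  induction l as [|[c y] l IH]; simpl; auto.
  unfold lin in *; simpl. rewrite flat_map_app, IH. f_equal. exact (lin_scale F c (G y)).
Qed.
Lemma mapsnd_lin (h : Y -> W) (F : X -> list (Z * Y)) l :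
  mapsnd h (lin F l) = lin (fun x => mapsnd h (F x)) l.
Proof.
  induction l as [|[c y] l IH]; simpl; auto.
  unfold lin, mapsnd, scale in *; simpl. rewrite map_app, IH, !map_map. auto.
Qed.
Lemma lin_mapsnd (F : Y -> list (Z * W)) (h : X -> Y) l :
  lin F (mapsnd h l) = lin (fun x => F (h x)) l.
Proof. induction l as [|[c y] l IH]; simpl; auto. unfold lin in *; simpl; rewrite IH; auto. Qed.
Lemma mapsnd_scale (h : X -> Y) n l : mapsnd h (scale n l) = scale n (mapsnd h l).
Proof. unfold mapsnd, scale; rewrite !map_map; auto. Qed.
Lemma lin_single_fun (h : X -> Y) l : lin (fun x => [(1, h x)]) l = mapsnd h l.
Proof.
  induction l as [|[c y] l IH]; [reflexivity|].
  transitivity (scale c [(1, h y)] ++ lin (fun x => [(1, h x)]) l); [reflexivity|].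
  rewrite IH. unfold scale; simpl; rewrite Z.mul_1_r; reflexivity.
Qed.
Lemma mapsnd_id (l : list (Z * X)) : mapsnd (fun x => x) l = l.
Proof. induction l as [|[c y] l IH]; simpl; auto. unfold mapsnd in *; simpl; rewrite IH; auto. Qed.
Lemma mapsnd_mapsnd (h : X -> Y) (k : Y -> W) l :
  mapsnd k (mapsnd h l) = mapsnd (fun x => k (h x)) l.
Proof. unfold mapsnd; rewrite map_map; auto. Qed.
Lemma mapsnd_ext (h k : X -> Y) l : (forall x, h x = k x) -> mapsnd h l = mapsnd k l.
Proof. intro H; unfold mapsnd; apply map_ext; intros; rewrite H; auto. Qed.

Lemma lin_fa_eqv (R : list (Z * X) -> Prop) (R' : list (Z * Y) -> Prop) (F : X -> list (Z * Y)) :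
  (forall r, R r -> fa_eqv R' (lin F r) []) ->
  forall l l', fa_eqv R l l' -> fa_eqv R' (lin F l) (lin F l').
Proof.
  intros HR l l' H; induction H.
  - reflexivity.
  - symmetry; auto.
  - etransitivity; eauto.
  - rewrite !lin_app. apply fa_app; auto.
  - apply fa_perm, Permutation_flat_map; auto.
  - unfold lin; simpl. rewrite !app_nil_r. apply scaleD.
  - unfold lin; simpl. rewrite app_nil_r. apply scale0.
  - apply HR; auto.
Qed.

Lemma mapsnd_fa_eqv (R : list (Z * X) -> Prop) (R' : list (Z * Y) -> Prop) (h : X -> Y) :
  (forall r, R r -> fa_eqv R' (mapsnd h r) []) ->
  forall l l', fa_eqv R l l' -> fa_eqv R' (mapsnd h l) (mapsnd h l').
Proof.
  intros HR l l' H. rewrite <- !lin_single_fun. apply (lin_fa_eqv R); auto.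
  intros r Hr. rewrite lin_single_fun; auto.
Qed.

Lemma lin_ext_eqv (R : list (Z * Y) -> Prop) (F G : X -> list (Z * Y)) l :
  (forall x, fa_eqv R (F x) (G x)) -> fa_eqv R (lin F l) (lin G l).
Proof.
  intro H; induction l as [|[c y] l IH]; [reflexivity|].
  change (fa_eqv R (scale c (F y) ++ lin F l) (scale c (G y) ++ lin G l)).
  apply fa_app; auto. apply scale_fa_eqv; auto.
Qed.

Lemma lin_app_fun (R : list (Z * Y) -> Prop) (F G : X -> list (Z * Y)) l :
  fa_eqv R (lin (fun x => F x ++ G x) l) (lin F l ++ lin G l).
Proof.
  apply fa_perm. induction l as [|[c y] l IH]; [constructor|].
  change (Permutation (scale c (F y ++ G y) ++ lin (fun x => F x ++ G x) l)
     ((scale c (F y) ++ lin F l) ++ (scale c (G y) ++ lin G l))).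
  rewrite scale_app, IH, <- !app_assoc. apply Permutation_app_head.
  rewrite !app_assoc. apply Permutation_app_tail. apply Permutation_app_comm.
Qed.

Lemma lin_relator2_nil (R : list (Z * Y) -> Prop) (E : X -> list (Z * Y)) x y :
  fa_eqv R (E x) (E y) -> fa_eqv R (lin E [(1, x); (-1, y)]) [].
Proof.
  intro H. unfold lin; simpl. rewrite app_nil_r. fold (scale 1 (E x)).
  rewrite scale1, H. apply app_scaleN1_nil.
Qed.
Lemma lin_relator3_nil (R : list (Z * Y) -> Prop) (E : X -> list (Z * Y)) x y z :
  fa_eqv R (E x) (E y ++ E z) -> fa_eqv R (lin E [(1, x); (-1, y); (-1, z)]) [].
Proof.
  intro H. unfold lin; simpl. rewrite app_nil_r. fold (scale 1 (E x)). rewrite scale1, H.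
  transitivity ((E y ++ scale (-1) (E y)) ++ (E z ++ scale (-1) (E z))).
  - apply fa_perm. rewrite <- !app_assoc. apply Permutation_app_head.
    rewrite !app_assoc. apply Permutation_app_tail. apply Permutation_app_comm.
  - rewrite !app_scaleN1_nil. reflexivity.
Qed.

Section Additive.
Variables (R : list (Z * X) -> Prop) (R' : list (Z * Y) -> Prop).
Variable phi : list (Z * X) -> list (Z * Y).
Hypothesis phi_eqv : forall l l', fa_eqv R l l' -> fa_eqv R' (phi l) (phi l').
Hypothesis phiD : forall l l', fa_eqv R' (phi (l ++ l')) (phi l ++ phi l').
Hypothesis phi_nil : fa_eqv R' (phi []) [].

Lemma additive_single x c : fa_eqv R' (phi [(c, x)]) (scale c (phi [(1, x)])).
Proof.
  assert (Hnat : forall k : nat,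
      fa_eqv R' (phi [(Z.of_nat k, x)]) (scale (Z.of_nat k) (phi [(1, x)]))).
  { intro k; induction k.
    - simpl. rewrite scale0, <- phi_nil. apply phi_eqv, fa_zero.
    - rewrite Nat2Z.inj_succ, <- Z.add_1_l, <- scaleD, scale1, <- IHk, <- phiD.
      apply phi_eqv. symmetry. apply fa_merge. }
  destruct (Z_le_gt_dec 0 c).
  - rewrite <- (Z2Nat.id c) by lia. apply Hnat.
  - set (k := Z.to_nat (- c)).
    assert (Hk : Z.of_nat k = - c) by (unfold k; rewrite Z2Nat.id; lia).
    transitivity (scale (-1) (phi [(Z.of_nat k, x)])).
    + apply eqv_scaleN1_of_app_nil. rewrite <- phiD, <- phi_nil. apply phi_eqv.
      rewrite Hk. simpl. rewrite fa_merge. replace (c + - c) with 0 by lia. apply fa_zero.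
    + rewrite Hnat, scale_scale, Hk. replace (-1 * - c) with c by lia. reflexivity.
Qed.

Lemma additive_lin l : fa_eqv R' (phi l) (lin (fun x => phi [(1, x)]) l).
Proof.
  induction l as [|[c y] l IH]; [exact phi_nil|].
  change ((c, y) :: l) with ([(c, y)] ++ l). rewrite phiD, IH, additive_single. reflexivity.
Qed.
End Additive.
End Linear.

Lemma flat_map_map_comm_Permutation {A B C : Type} (f : A -> B -> C) (a : list A) (b : list B) :
  Permutation (flat_map (fun x => map (fun y => f x y) b) a)
              (flat_map (fun y => map (fun x => f x y) a) b).
Proof.
  revert b; induction a as [|x a IH]; intro b; simpl.
  - induction b; simpl; auto.
  - rewrite IH. clear IH. induction b as [|y b IHb]; simpl; auto.
    apply Permutation_cons; auto. rewrite <- IHb.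
    rewrite !app_assoc. apply Permutation_app_tail. apply Permutation_app_comm.
Qed.

Lemma lin_comm_Permutation {A B C : Type} (f : A -> B -> C) (a : list (Z * A)) (b : list (Z * B)) :
  Permutation (lin (fun x => lin (fun y => [(1, f x y)]) b) a)
              (lin (fun y => lin (fun x => [(1, f x y)]) a) b).
Proof.
  set (g p q := (fst p * fst q, f (snd p) (snd q))).
  assert (Hab : lin (fun x => lin (fun y => [(1, f x y)]) b) a
                = flat_map (fun p => map (fun q => g p q) b) a).
  { unfold lin at 1. apply flat_map_ext; intro p.
    rewrite lin_single_fun. unfold scale, mapsnd. rewrite map_map. reflexivity. }
  assert (Hba : lin (fun y => lin (fun x => [(1, f x y)]) a) b
                = flat_map (fun q => map (fun p => g p q) a) b).
  { unfold lin at 1. apply flat_map_ext; intro q.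
    rewrite lin_single_fun. unfold scale, mapsnd, g. rewrite map_map.
    apply map_ext; intro; f_equal. simpl; lia. }
  rewrite Hab, Hba. apply flat_map_map_comm_Permutation.
Qed.

Section FreeModule.
Variable M : cmonoid.

Notation fa_free := (fun _ => False).

Lemma zgen_eq (S : SetOver M) x (g1 g2 : zgen S x) : proj1_sig g1 = proj1_sig g2 -> g1 = g2.
Proof.
  destruct g1 as [q1 h1], g2 as [q2 h2]; simpl; intros ->. f_equal. apply proof_irrelevance.
Qed.

Lemma zgen_act_val (S : SetOver M) x y t (p : mop x y = t) g :
  proj1_sig (@zgen_act M S x y t p g) = (mop (fst (proj1_sig g)) y, snd (proj1_sig g)).
Proof. destruct g as [[? ?] ?]; reflexivity. Qed.
Lemma zgen_map_val (S T : SetOver M) f hf x g :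
  proj1_sig (@zgen_map M S T f hf x g) = (fst (proj1_sig g), f (snd (proj1_sig g))).
Proof. destruct g as [[? ?] ?]; reflexivity. Qed.

Lemma hact_ZF (S : SetOver M) x y t (p : mop x y = t) (l : list (Z * zgen S x)) :
  hact (ZF S) p l = mapsnd (zgen_act p) l.
Proof. reflexivity. Qed.
Lemma hact_htensor (A B : HMod M) x y t (p : mop x y = t) (l : list (Z * tgen A B x)) :
  hact (htensor A B) p l = mapsnd (tgen_act p) l.
Proof. reflexivity. Qed.
Lemma Zmap_mapsnd (S T : SetOver M) f (hf : forall s : S, so_pi T (f s) = so_pi S s) x l :
  Zmap hf (x := x) l = mapsnd (@zgen_map M S T f hf x) l.
Proof. reflexivity. Qed.
Lemma tmap_mapsnd (A A' B B' : HMod M) (F : hmap A A') (G : hmap B B') x l :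
  tmap F G (x := x) l = mapsnd (fun g => TG (tp g) (F _ (ta g)) (G _ (tb g))) l.
Proof. reflexivity. Qed.
Lemma hsigma_mapsnd (A B : HMod M) x l :
  hsigma A B x l = mapsnd (fun g => TG (swap_proof (tp g)) (tb g) (ta g)) l.
Proof. reflexivity. Qed.
Lemma halpha_lin (A B C : HMod M) x l :
  halpha A B C x l =
  lin (fun g : tgen (htensor A B) C x =>
         mapsnd (X := tgen A B (tz g))
           (fun h => TG (assoc_proof (tp h) (tp g)) (ta h)
              ([(1, TG (eq_refl (mop (tt h) (tt g))) (tb h) (tb g))] : hcar (htensor B C) _))
           (ta g)) l.
Proof.
  induction l as [|[c g] l IH]; [reflexivity|].
  unfold halpha, lin in *; simpl. rewrite IH. f_equal.
  unfold scale, mapsnd. rewrite map_map. reflexivity.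
Qed.

Lemma TG_ZF_eq (S T : SetOver M) x z z' t t' (p : mop z t = x) (p' : mop z' t' = x)
  (a : list (Z * zgen S z)) (a' : list (Z * zgen S z'))
  (b : list (Z * zgen T t)) (b' : list (Z * zgen T t')) :
  z = z' -> t = t' ->
  mapsnd (@proj1_sig _ _) a = mapsnd (@proj1_sig _ _) a' ->
  mapsnd (@proj1_sig _ _) b = mapsnd (@proj1_sig _ _) b' ->
  @TG M (ZF S) (ZF T) x z t p a b = @TG M (ZF S) (ZF T) x z' t' p' a' b'.
Proof.
  intros -> -> Ha Hb.
  assert (val_inj : forall (U : SetOver M) w (l l' : list (Z * zgen U w)),
      mapsnd (@proj1_sig _ _) l = mapsnd (@proj1_sig _ _) l' -> l = l').
  { intros U w l; induction l as [|[c g] l IH]; intros [|[c' g'] l'] H; try discriminate; auto.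
    injection H as -> Hg Hl. f_equal; [f_equal; apply zgen_eq; auto | auto]. }
  apply val_inj in Ha; apply val_inj in Hb; subst. f_equal. apply proof_irrelevance.
Qed.

Lemma zgen_pair_proof {u1 u2 s t z t0 x : M}
  (h1 : mop u1 s = z) (h2 : mop u2 t = t0) (p : mop z t0 = x) :
  mop (mop u1 u2) (mop s t) = x.
Proof. subst. rewrite <- !mopA. f_equal. rewrite !mopA. f_equal. apply mopC. Qed.

Definition zgen_pair (S T : SetOver M) z t x (p : mop z t = x) (ia : zgen S z) (jb : zgen T t)
  : zgen (so_prod S T) x :=
  let (q1, h1) := ia in let (q2, h2) := jb in
  exist _ (mop (fst q1) (fst q2), (snd q1, snd q2)) (zgen_pair_proof h1 h2 p).
Arguments zgen_pair {S T z t x} p ia jb.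

Lemma zgen_pair_val (S T : SetOver M) z t x (p : mop z t = x) ia jb :
  proj1_sig (@zgen_pair S T z t x p ia jb) =
  (mop (fst (proj1_sig ia)) (fst (proj1_sig jb)), (snd (proj1_sig ia), snd (proj1_sig jb))).
Proof. destruct ia as [[? ?] ?], jb as [[? ?] ?]; reflexivity. Qed.

Ltac zgen_val_eq :=
  unfold mapsnd; cbn [map fst snd tz tt tp ta tb]; do 2 f_equal; apply zgen_eq;
  repeat rewrite ?zgen_pair_val, ?zgen_act_val, ?zgen_map_val; simpl.

Definition mu_gen (S T : SetOver M) x (g : tgen (ZF S) (ZF T) x)
  : list (Z * zgen (so_prod S T) x) :=
  lin (fun ia => lin (fun jb => [(1, zgen_pair (tp g) ia jb)]) (tb g)) (ta g).
Arguments mu_gen {S T x} g.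
Definition mu (S T : SetOver M) : hmap (htensor (ZF S) (ZF T)) (ZF (so_prod S T)) :=
  fun x l => lin (@mu_gen S T x) l.

Lemma mu_gen_TG (S T : SetOver M) x z t (p : mop z t = x) a b :
  mu_gen (@TG M (ZF S) (ZF T) x z t p a b)
  = lin (fun ia => lin (fun jb => [(1, zgen_pair p ia jb)]) b) a.
Proof. reflexivity. Qed.

Lemma mu_gen_relator_nil (S T : SetOver M) x r :
  trel r -> fa_eqv fa_free (lin (@mu_gen S T x) r) [].
Proof.
  destruct 1.
  - apply lin_relator3_nil. rewrite !mu_gen_TG. cbn [hadd ZF]. rewrite lin_app. reflexivity.
  - apply lin_relator3_nil. rewrite !mu_gen_TG. cbn [hadd ZF].
    rewrite (lin_ext _ (fun ia => lin (fun jb => [(1, zgen_pair p ia jb)]) b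
                                ++ lin (fun jb => [(1, zgen_pair p ia jb)]) b'))
      by (intro; apply lin_app).
    apply lin_app_fun.
  - apply lin_relator2_nil. rewrite !mu_gen_TG. apply (lin_fa_eqv fa_free); auto.
    intros _ [].
  - apply lin_relator2_nil. rewrite !mu_gen_TG. apply lin_ext_eqv; intro ia.
    apply (lin_fa_eqv fa_free); auto. intros _ [].
  - apply lin_relator2_nil. rewrite !mu_gen_TG, hact_ZF, lin_mapsnd. apply fa_eqv_of_eq.
    apply lin_ext; intro ia. rewrite hact_ZF, lin_mapsnd. apply lin_ext; intro jb.
    zgen_val_eq. f_equal. rewrite <- !mopA. f_equal. apply mopC.
Qed.

Lemma mu_hmorph (S T : SetOver M) : is_hmorph (mu S T).
Proof.
  split; [|split].
  - intros x a a' H. apply (lin_fa_eqv (@trel M (ZF S) (ZF T) x)); auto.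
    apply mu_gen_relator_nil.
  - intros x a a'. cbn [heqv hadd htensor ZF]. unfold mu. rewrite lin_app. reflexivity.
  - intros x y t p a. cbn [heqv htensor ZF]. rewrite hact_ZF, hact_htensor. unfold mu.
    rewrite lin_mapsnd, mapsnd_lin. apply fa_eqv_of_eq, lin_ext. intros [z t0 q a0 b0].
    unfold tgen_act; cbn [tz tt tp ta tb].
    rewrite !mu_gen_TG, hact_ZF, lin_mapsnd, mapsnd_lin. apply lin_ext; intro ia.
    rewrite mapsnd_lin. apply lin_ext; intro jb.
    zgen_val_eq. f_equal. rewrite <- !mopA. f_equal. apply mopC.
Qed.

Lemma mopA_swap_proof {u s t x : M} (h : mop u (mop s t) = x) : mop (mop u s) t = x.
Proof. subst; symmetry; apply mopA. Qed.
Lemma mone_mop (s : M) : mop mone s = s.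
Proof. rewrite mopC; apply mop1. Qed.

Definition split_gen (S T : SetOver M) x (g : zgen (so_prod S T) x) : tgen (ZF S) (ZF T) x :=
  let (q, h) := g in
  @TG M (ZF S) (ZF T) x (mop (fst q) (so_pi S (fst (snd q)))) (so_pi T (snd (snd q)))
    (mopA_swap_proof h)
    [(1, exist _ (fst q, fst (snd q)) eq_refl)]
    [(1, exist _ (mone, snd (snd q)) (mone_mop _))].
Arguments split_gen {S T x} g.
Definition mu_inv (S T : SetOver M) : hmap (ZF (so_prod S T)) (htensor (ZF S) (ZF T)) :=
  fun x l => mapsnd (@split_gen S T x) l.

Lemma mu_inv_hmorph (S T : SetOver M) : is_hmorph (mu_inv S T).
Proof.
  split; [|split].
  - intros x a a' H. apply (mapsnd_fa_eqv fa_free); auto. intros _ [].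
  - intros x a a'. cbn [heqv hadd htensor ZF]. unfold mu_inv, mapsnd.
    rewrite map_app. reflexivity.
  - intros x y t p a. cbn [heqv htensor ZF]. rewrite hact_ZF, hact_htensor. unfold mu_inv.
    rewrite !mapsnd_mapsnd. apply fa_eqv_of_eq, mapsnd_ext. intros [[u [s t1]] h].
    unfold tgen_act. cbn. apply TG_ZF_eq; auto.
    rewrite <- !mopA. f_equal. apply mopC.
Qed.

Lemma mu_mu_inv (S T : SetOver M) x l : mu S T x (mu_inv S T x l) = l.
Proof.
  unfold mu, mu_inv. rewrite lin_mapsnd, (lin_ext _ (fun g => [(1, g)])).
  - rewrite lin_single_fun. apply mapsnd_id.
  - intros [[u [s t]] h]. cbn [split_gen]. rewrite mu_gen_TG, !lin_single1.
    do 2 f_equal. apply zgen_eq. simpl. rewrite mop1. reflexivity.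
Qed.

(* The balance relation with u := u2 moves the coefficient u2 of the right
   generator (u2,t) = u2_*(e,t) onto the left one. *)
Lemma split_gen_pair (S T : SetOver M) z t0 x (p : mop z t0 = x) (ia : zgen S z) (jb : zgen T t0) :
  fa_eqv (@trel M (ZF S) (ZF T) x) [(1, split_gen (zgen_pair p ia jb))]
     [(1, @TG M (ZF S) (ZF T) x z t0 p [(1, ia)] [(1, jb)])].
Proof.
  destruct ia as [[u1 s] h1], jb as [[u2 t] h2]. simpl in h1, h2. subst z t0.
  set (v := mop u1 (so_pi S s)).
  assert (q1 : mop (mop v u2) (so_pi T t) = x).
  { subst x v; rewrite <- !mopA; f_equal; rewrite (mopC u2); reflexivity. }
  assert (q2 : mop v (mop (so_pi T t) u2) = x) by (subst x v; f_equal; apply mopC).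
  pose proof (@trel_bal M (ZF S) (ZF T) x v (so_pi T t) u2 _ _ eq_refl eq_refl q1 q2
     [(1, exist _ (u1, s) eq_refl)] [(1, exist _ (mone, t) (mone_mop _))]) as Hbal.
  apply single_eqv_of_relator2. apply fa_rel in Hbal.
  match type of Hbal with fa_eqv _ [(1, ?X); (-1, ?Y)] [] =>
    replace (split_gen (zgen_pair p _ _)) with X; [replace (TG p _ _) with Y; [exact Hbal|]|] end.
  - apply TG_ZF_eq; auto.
    + apply mopC.
    + simpl. rewrite mone_mop. reflexivity.
  - apply TG_ZF_eq; simpl; auto.
    subst v. rewrite <- !mopA. f_equal. apply mopC.
Qed.

Lemma TG_ZF_linear (S T : SetOver M) x z t (p : mop z t = x) a b :
  fa_eqv (@trel M (ZF S) (ZF T) x) [(1, @TG M (ZF S) (ZF T) x z t p a b)]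
    (lin (fun ia => lin (fun jb => [(1, @TG M (ZF S) (ZF T) x z t p [(1, ia)] [(1, jb)])]) b) a).
Proof.
  etransitivity.
  { apply (additive_lin fa_free _ (fun a0 => [(1, @TG M (ZF S) (ZF T) x z t p a0 b)])).
    - intros l1 l2 H. apply single_eqv_of_relator2, fa_rel, trel_eqvl; auto.
    - intros l1 l2. apply single_eqv_of_relator3, fa_rel.
      exact (@trel_addl M (ZF S) (ZF T) x z t p l1 l2 b).
    - apply nil_of_eqv_app_self, single_eqv_of_relator3, fa_rel.
      exact (@trel_addl M (ZF S) (ZF T) x z t p [] [] b). }
  apply lin_ext_eqv; intro ia.
  apply (additive_lin fa_free _ (fun b0 => [(1, @TG M (ZF S) (ZF T) x z t p [(1, ia)] b0)])).
  - intros l1 l2 H. apply single_eqv_of_relator2, fa_rel, trel_eqvr; auto.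
  - intros l1 l2. apply single_eqv_of_relator3, fa_rel.
    exact (@trel_addr M (ZF S) (ZF T) x z t p [(1, ia)] l1 l2).
  - apply nil_of_eqv_app_self, single_eqv_of_relator3, fa_rel.
    exact (@trel_addr M (ZF S) (ZF T) x z t p [(1, ia)] [] []).
Qed.

Lemma mu_inv_mu (S T : SetOver M) x l :
  fa_eqv (@trel M (ZF S) (ZF T) x) (mu_inv S T x (mu S T x l)) l.
Proof.
  unfold mu_inv, mu. rewrite mapsnd_lin.
  transitivity (lin (fun g => [(1, g)]) l); [|rewrite lin_single_fun, mapsnd_id; reflexivity].
  apply lin_ext_eqv. intros [z t p a b]. rewrite mu_gen_TG, mapsnd_lin, TG_ZF_linear.
  apply lin_ext_eqv; intro ia. rewrite mapsnd_lin. apply lin_ext_eqv; intro jb.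
  apply split_gen_pair.
Qed.

Lemma mu_iso (S T : SetOver M) : hiso (mu S T).
Proof.
  split; [apply mu_hmorph|]. exists (mu_inv S T). split; [apply mu_inv_hmorph|]. split.
  - intros x a. apply mu_inv_mu.
  - intros x b. cbn [heqv ZF]. rewrite mu_mu_inv. reflexivity.
Qed.

Definition unit_gen (x : M) : zgen (@so_unit M) x := exist _ (x, Datatypes.tt) (mop1 x).
Definition eps : hmap hZ (ZF (@so_unit M)) := fun x n => [(n, unit_gen x)].
Definition coeff_sum {X : Type} (l : list (Z * X)) : Z := fold_right (fun p acc => fst p + acc) 0 l.
Definition eps_inv : hmap (ZF (@so_unit M)) hZ := fun x l => coeff_sum l.

Lemma coeff_sum_app {X : Type} (l l' : list (Z * X)) :
  coeff_sum (l ++ l') = coeff_sum l + coeff_sum l'.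
Proof. induction l; simpl; auto. rewrite IHl; lia. Qed.
Lemma coeff_sum_fa_eqv {X : Type} (l l' : list (Z * X)) :
  fa_eqv fa_free l l' -> coeff_sum l = coeff_sum l'.
Proof.
  induction 1; auto.
  - congruence.
  - rewrite !coeff_sum_app; congruence.
  - induction H; simpl; auto; lia.
  - simpl; lia.
  - contradiction.
Qed.

Lemma unit_gen_unique x (g : zgen (@so_unit M) x) : g = unit_gen x.
Proof. apply zgen_eq. destruct g as [[u []] h]. simpl in *. rewrite <- h, mop1. reflexivity. Qed.

Lemma eps_hmorph : is_hmorph eps.
Proof.
  split; [|split].
  - intros x a a' H. cbn in H. subst. reflexivity.
  - intros x a a'. symmetry. apply fa_merge.
  - intros x y t p a. apply fa_eqv_of_eq. cbn. unfold eps.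
    do 2 f_equal. symmetry; apply unit_gen_unique.
Qed.

Lemma eps_inv_hmorph : is_hmorph eps_inv.
Proof.
  split; [|split].
  - intros x a a' H. apply coeff_sum_fa_eqv; auto.
  - intros x a a'. apply coeff_sum_app.
  - intros x y t p a. cbn. unfold eps_inv. induction a; simpl; auto. rewrite IHa; auto.
Qed.

Lemma eps_eps_inv x (l : list (Z * zgen (@so_unit M) x)) :
  fa_eqv fa_free (eps x (eps_inv x l)) l.
Proof.
  unfold eps, eps_inv. induction l as [|[c g] l IH]; simpl.
  - apply fa_zero.
  - rewrite (unit_gen_unique _ g). change ((c, unit_gen x) :: l) with ([(c, unit_gen x)] ++ l).
    transitivity ([(c, unit_gen x)] ++ [(coeff_sum l, unit_gen x)]).
    + symmetry; apply fa_merge.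
    + rewrite IH. reflexivity.
Qed.

Lemma eps_iso : hiso eps.
Proof.
  split; [apply eps_hmorph|]. exists eps_inv. split; [apply eps_inv_hmorph|]. split.
  - intros x a. cbn. lia.
  - apply eps_eps_inv.
Qed.

Lemma zsmul_ZF (S : SetOver M) x c (L : list (Z * zgen S x)) :
  fa_eqv fa_free (zsmul (A := ZF S) c L) (scale c L).
Proof.
  assert (iter_scale : forall q,
      fa_eqv fa_free (Pos.iter (fun l' => L ++ l') [] q) (scale (Zpos q) L)).
  { induction q using Pos.peano_ind.
    - simpl. rewrite app_nil_r, scale1. reflexivity.
    - rewrite Pos.iter_succ. transitivity (scale 1 L ++ scale (Zpos q) L).
      + rewrite scale1, <- IHq. reflexivity.
      + rewrite scaleD. replace (1 + Zpos q) with (Zpos (Pos.succ q)) by lia. reflexivity. }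
  destruct c as [|q|q]; simpl.
  - symmetry; apply scale0.
  - apply iter_scale.
  - unfold fa_neg. rewrite (map_ext _ (fun p => (-1 * fst p, snd p)))
      by (intros [c y]; simpl; f_equal; lia).
    fold (scale (-1) (Pos.iter (fun l' => L ++ l') [] q)).
    rewrite iter_scale, scale_scale. reflexivity.
Qed.

Lemma fa_lift_ZF {X : Type} (S : SetOver M) x (F : X -> list (Z * zgen S x)) l :
  fa_eqv fa_free (fa_lift (A := ZF S) F l) (lin F l).
Proof.
  induction l as [|[c y] l IH]; simpl; [reflexivity|].
  change (fa_eqv fa_free (zsmul (A := ZF S) c (F y) ++ fa_lift (A := ZF S) F l)
                        (scale c (F y) ++ lin F l)).
  rewrite zsmul_ZF, IH. reflexivity.
Qed.

Lemma mu_natural (S S' T T' : SetOver M) (f : S -> S') (g : T -> T')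
  (hf : forall s, so_pi S' (f s) = so_pi S s) (hg : forall t, so_pi T' (g t) = so_pi T t) :
  heq_map (hcomp (Zmap (prod_map_pi hf hg)) (mu S T))
          (hcomp (mu S' T') (tmap (Zmap hf) (Zmap hg))).
Proof.
  intros x l. unfold hcomp. apply fa_eqv_of_eq.
  rewrite Zmap_mapsnd, tmap_mapsnd. unfold mu. rewrite mapsnd_lin, lin_mapsnd.
  apply lin_ext; intros [z t p a b]. cbn [tp ta tb]. rewrite !mu_gen_TG, !Zmap_mapsnd.
  rewrite mapsnd_lin, lin_mapsnd. apply lin_ext; intro ia.
  rewrite mapsnd_lin, lin_mapsnd. apply lin_ext; intro jb.
  zgen_val_eq. reflexivity.
Qed.

Lemma mu_assoc (S T U : SetOver M) :
  heq_map (hcomp (Zmap (@set_assoc_pi M S T U))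
             (hcomp (mu (so_prod S T) U) (tmap (mu S T) (hid (ZF U)))))
          (hcomp (mu S (so_prod T U))
             (hcomp (tmap (hid (ZF S)) (mu T U)) (halpha (ZF S) (ZF T) (ZF U)))).
Proof.
  intros x l. unfold hcomp. apply fa_eqv_of_eq.
  rewrite Zmap_mapsnd, !tmap_mapsnd, halpha_lin. unfold mu at 1 3.
  rewrite mapsnd_lin, lin_mapsnd, mapsnd_lin, lin_lin.
  apply lin_ext; intros [z t p A c]. cbn [tz tt tp ta tb]. unfold hid.
  rewrite mu_gen_TG. unfold mu. rewrite lin_lin, mapsnd_lin, mapsnd_mapsnd, lin_mapsnd.
  apply lin_ext; intros [z' t' p' a b]. cbn [tz tt tp ta tb].
  rewrite !mu_gen_TG, lin_single1, mu_gen_TG. cbn [tz tt tp ta tb].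
  rewrite lin_lin, mapsnd_lin. apply lin_ext; intro ia.
  rewrite lin_lin, mapsnd_lin, lin_lin. apply lin_ext; intro jb.
  rewrite lin_single1, mapsnd_lin, lin_lin. apply lin_ext; intro kc.
  rewrite lin_single1. zgen_val_eq. f_equal. symmetry; apply mopA.
Qed.

Lemma mu_left_unit (S : SetOver M) :
  heq_map (hcomp (Zmap (@set_lambda_pi M S)) (hcomp (mu so_unit S) (tmap eps (hid (ZF S)))))
          (hlambda (ZF S)).
Proof.
  intros x l. unfold hcomp, hlambda.
  rewrite Zmap_mapsnd, tmap_mapsnd. unfold mu. rewrite lin_mapsnd, mapsnd_lin, fa_lift_ZF.
  apply lin_ext_eqv; intros [z t p k b]. cbn [tp ta tb]. rewrite zsmul_ZF.
  apply fa_eqv_of_eq. rewrite mu_gen_TG. unfold eps, hid.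
  rewrite lin_single, mapsnd_scale. f_equal.
  rewrite hact_ZF, mapsnd_lin, <- lin_single_fun. apply lin_ext; intro jb.
  zgen_val_eq. rewrite mopC. reflexivity.
Qed.

Lemma mu_right_unit (S : SetOver M) :
  heq_map (hcomp (Zmap (@set_rho_pi M S)) (hcomp (mu S so_unit) (tmap (hid (ZF S)) eps)))
          (hrho (ZF S)).
Proof.
  intros x l. unfold hcomp, hrho.
  rewrite Zmap_mapsnd, tmap_mapsnd. unfold mu. rewrite lin_mapsnd, mapsnd_lin, fa_lift_ZF.
  apply lin_ext_eqv; intros [z t p a k]. cbn [tp ta tb]. rewrite zsmul_ZF.
  apply fa_eqv_of_eq. rewrite mu_gen_TG. unfold eps, hid. rewrite mapsnd_lin.
  rewrite (lin_ext _ (fun ia => scale k (mapsnd (zgen_map (@set_rho_pi M S) (x := x))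
                                          [(1, zgen_pair p ia (unit_gen t))])))
    by (intro; rewrite lin_single, mapsnd_scale; reflexivity).
  rewrite lin_scale_fun. f_equal.
  rewrite hact_ZF, <- lin_single_fun. apply lin_ext; intro ia. zgen_val_eq. reflexivity.
Qed.

Lemma mu_symmetry (S T : SetOver M) :
  heq_map (hcomp (Zmap (@set_sigma_pi M S T)) (mu S T))
          (hcomp (mu T S) (hsigma (ZF S) (ZF T))).
Proof.
  intros x l. unfold hcomp.
  rewrite Zmap_mapsnd, hsigma_mapsnd. unfold mu. rewrite mapsnd_lin, lin_mapsnd.
  apply lin_ext_eqv; intros [z t p a b]. cbn [tp ta tb]. rewrite !mu_gen_TG, mapsnd_lin.
  rewrite (lin_ext _ (fun ia => lin (fun jb =>
             [(1, zgen_map (@set_sigma_pi M S T) (zgen_pair p ia jb))]) b))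
    by (intro; rewrite mapsnd_lin; reflexivity).
  rewrite (lin_ext (fun jb => lin (fun ia => [(1, zgen_pair (swap_proof p) jb ia)]) a)
     (fun jb => lin (fun ia => [(1, zgen_map (@set_sigma_pi M S T) (zgen_pair p ia jb))]) a)).
  - apply fa_perm, lin_comm_Permutation.
  - intro jb. apply lin_ext; intro ia. zgen_val_eq. f_equal. apply mopC.
Qed.
End FreeModule.

Theorem proposition4p2 (M : cmonoid) :
  exists (mu : forall S T : SetOver M, hmap (htensor (ZF S) (ZF T)) (ZF (so_prod S T)))
         (eps : hmap hZ (ZF (@so_unit M))),
    (* isomorphisms *)
    (forall S T : SetOver M, hiso (mu S T)) /\
    hiso eps /\
    (* naturality in S and T *)
    (forall (S S' T T' : SetOver M) (f : S -> S') (g : T -> T')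
            (hf : forall s, so_pi S' (f s) = so_pi S s)
            (hg : forall t, so_pi T' (g t) = so_pi T t),
        heq_map (hcomp (Zmap (prod_map_pi hf hg)) (mu S T))
                (hcomp (mu S' T') (tmap (Zmap hf) (Zmap hg)))) /\
    (* associativity coherence *)
    (forall S T U : SetOver M,
        heq_map (hcomp (Zmap (@set_assoc_pi M S T U))
                   (hcomp (mu (so_prod S T) U) (tmap (mu S T) (hid (ZF U)))))
                (hcomp (mu S (so_prod T U))
                   (hcomp (tmap (hid (ZF S)) (mu T U)) (halpha (ZF S) (ZF T) (ZF U))))) /\
    (* left unit coherence *)
    (forall S : SetOver M,
        heq_map (hcomp (Zmap (@set_lambda_pi M S))
                   (hcomp (mu so_unit S) (tmap eps (hid (ZF S)))))
                (hlambda (ZF S))) /\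
    (* right unit coherence *)
    (forall S : SetOver M,
        heq_map (hcomp (Zmap (@set_rho_pi M S))
                   (hcomp (mu S so_unit) (tmap (hid (ZF S)) eps)))
                (hrho (ZF S))) /\
    (* symmetry coherence *)
    (forall S T : SetOver M,
        heq_map (hcomp (Zmap (@set_sigma_pi M S T)) (mu S T))
                (hcomp (mu T S) (hsigma (ZF S) (ZF T)))).
Proof.
  exists (mu M), (eps M).
  split; [apply mu_iso|]. split; [apply eps_iso|]. split; [apply mu_natural|].
  split; [apply mu_assoc|]. split; [apply mu_left_unit|]. split; [apply mu_right_unit|].
  apply mu_symmetry.
Qed.
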